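(* Let $f$ be a homeomorphism of a compact metric space $(X,d)$ and let $\mu$ be a Borel measure on $X$ with $\mu(X)>0$. Then: (i) $\mu$ is expansive with respect to $f$ if and only if $UE^\mu_f(X)=X$; (ii) $f$ is measure-expansive if and only if $UE^M_f(X)=X$; (iii) $\mu$ has shadowing with respect to $f$ if and only if $Sh^\mu_f(X)=X$.
   Context: $B(x,\epsilon)=\{y:d(x,y)<\epsilon\}$. For $\mathfrak{c}>0$ and $x\in X$, $\Phi^{\mathfrak{c}}_f(x)=\{y\in X: d(f^n(x),f^n(y))\le\mathfrak{c}\ \forall n\in\mathbb{Z}\}$. $\mu$ is expansive (w.r.t. $f$) if there is $\mathfrak{c}>0$ with $\mu(\Phi^{\mathfrak{c}}_f(x))=0$ for every $x\in X$. $f$ is measure-expansive if there is $\mathfrak{c}>0$ such that for every non-atomic Borel measure $\nu$ on $X$ and every $x\in X$, $\nu(\Phi^{\mathfrak{c}}_f(x))=0$. For a point $x$ and $\mathfrak{c}>0$, and $z\in B(x,\mathfrak{c})$, let $\Gamma^{\mathfrak{c}}_f(z)=\{y\in B(x,\mathfrak{c}): d(f^n(y),f^n(z))\le\mathfrak{c}\ \forall n\in\mathbb{Z}\}$. $x$ is a $\mu$-uniformly expansive point of $f$ if there is $\mathfrak{c}>0$ with $\mu(\Gamma^{\mathfrak{c}}_f(z))=0$ for every $z\in B(x,\mathfrak{c})$; $UE^\mu_f(X)$ is the set of such points. $x$ is a uniformly measure expansive point of $f$ if there is $\mathfrak{c}>0$ such that for every non-atomic Borel measure $\nu$ on $X$,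 $\nu(\Gamma^{\mathfrak{c}}_f(z))=0$ for every $z\in B(x,\mathfrak{c})$; $UE^M_f(X)$ is the set of such points. A $\delta$-pseudo orbit for $f$ is $\{x_n\}_{n\in\mathbb{Z}}$ with $d(f(x_n),x_{n+1})<\delta$ for all $n$; it is through a set $B$ if $x_0\in B$; it is $\epsilon$-traced if there is $y\in X$ with $d(f^n(y),x_n)<\epsilon$ for all $n$. $\mu$ has shadowing (w.r.t. $f$) if for every $\epsilon>0$ there are $\delta>0$ and a Borel set $B$ with $\mu(X\setminus B)=0$ such that every $\delta$-pseudo orbit through $B$ is $\epsilon$-traced. $x$ is a $\mu$-shadowable point of $f$ if for every $\epsilon>0$ there are $\delta>0$ and a Borel set $B$ with $\mu(X\setminus B)=0$ such that every $\delta$-pseudo orbit through $B\cap B(x,\delta)$ is $\epsilon$-traced; $Sh^\mu_f(X)$ is the set of such points. *)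

From HB Require Import structures.
From mathcomp Require Import all_boot all_order all_algebra.
From mathcomp Require Import all_classical all_reals all_analysis.
Set Implicit Arguments. Unset Strict Implicit. Unset Printing Implicit Defensive.
Import Order.TTheory GRing.Theory Num.Theory.
Local Open Scope classical_set_scope.
Local Open Scope ring_scope.

Section Dyn.
Variables (R : realType) (disp : measure_display) (X : measurableType disp).
Variable dist : X -> X -> R.

Definition is_metric : Prop :=
  (forall x y, 0 <= dist x y) /\ (forall x y, dist x y = 0 <-> x = y) /\
  (forall x y, dist x y = dist y x) /\
  (forall x y z, dist x z <= dist x y + dist y z).

Definition mball (x : X) (e : R) : set X := [set y | dist x y < e].

Definition dopen (U : set X) : Prop :=
  forall x, U x -> exists2 e : R, 0 < e & mball x e `<=` U.

Definition dcompact : Prop :=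
  forall (I : Type) (U : I -> set X), (forall i, dopen (U i)) ->
    (forall x, exists i, U i x) ->
    exists (n : nat) (h : 'I_n -> I), forall x, exists j : 'I_n, U (h j) x.

Definition dcontinuous (h : X -> X) : Prop :=
  forall x (e : R), 0 < e -> exists2 d : R, 0 < d &
    forall y, dist x y < d -> dist (h x) (h y) < e.

Definition borel_structure : Prop :=
  (@measurable _ X) = <<s dopen >>.

Definition homeo (f g : X -> X) : Prop :=
  cancel f g /\ cancel g f /\ dcontinuous f /\ dcontinuous g.

Variables (f g : X -> X).

(* integer iterates: f^n for n : int, with f^(-k) = g^k *)
Definition iterz (n : int) (x : X) : X :=
  match n with
  | Posz k => iter k f x
  | Negz k => iter k.+1 g x
  end.

Definition Phi (c : R) (x : X) : set X :=
  [set y | forall n : int, dist (iterz n x) (iterz n y) <= c].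

Definition non_atomic (nu : {measure set X -> \bar R}) : Prop :=
  forall x, nu [set x] = 0%E.

Definition expansive_measure (mu : {measure set X -> \bar R}) : Prop :=
  exists2 c : R, 0 < c & forall x, mu (Phi c x) = 0%E.

Definition measure_expansive : Prop :=
  exists2 c : R, 0 < c & forall nu : {measure set X -> \bar R},
    non_atomic nu -> forall x, nu (Phi c x) = 0%E.

Definition Gamma (c : R) (x z : X) : set X :=
  [set y | mball x c y /\ forall n : int, dist (iterz n y) (iterz n z) <= c].

Definition UE_mu (mu : {measure set X -> \bar R}) : set X :=
  [set x | exists2 c : R, 0 < c &
     forall z, mball x c z -> mu (Gamma c x z) = 0%E].

Definition UE_M : set X :=
  [set x | exists2 c : R, 0 < c & forall nu : {measure set X -> \bar R},
     non_atomic nu -> forall z, mball x c z -> nu (Gamma c x z) = 0%E].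

Definition pseudo_orbit (delta : R) (xs : int -> X) : Prop :=
  forall n : int, dist (f (xs n)) (xs (n + 1)) < delta.

Definition traced (eps : R) (xs : int -> X) : Prop :=
  exists y, forall n : int, dist (iterz n y) (xs n) < eps.

Definition has_shadowing (mu : {measure set X -> \bar R}) : Prop :=
  forall eps : R, 0 < eps -> exists2 delta : R, 0 < delta &
    exists B : set X, measurable B /\ mu (~` B) = 0%E /\
      forall xs, pseudo_orbit delta xs -> B (xs 0) -> traced eps xs.

Definition Sh_mu (mu : {measure set X -> \bar R}) : set X :=
  [set x | forall eps : R, 0 < eps -> exists2 delta : R, 0 < delta &
    exists B : set X, measurable B /\ mu (~` B) = 0%E /\
      forall xs, pseudo_orbit delta xs -> (B `&` mball x delta) (xs 0) ->
        traced eps xs].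

End Dyn.

From HB Require Import structures.
From mathcomp Require Import all_boot all_order all_algebra.
From mathcomp Require Import all_classical all_reals all_analysis.
From mathcomp Require Import lra.
Import Order.TTheory GRing.Theory Num.Theory.
Local Open Scope classical_set_scope.
Local Open Scope ring_scope.

(* Each global property is "at some uniform scale c, every point x satisfies
   P x c", while its local version lets the scale depend on x.  Both pass to
   smaller scales: a set Gamma c' x' z is contained in Phi c' z, and Phi c x
   is contained in Gamma c' x' x once x lies within c'/2 of x' and c <= c'/2.
   Compactness then picks finitely many centres x' covering X with balls of
   half their local radius, and the least of these radii is a uniform scale.
   For expansiveness only the closure of the relevant null sets (of mu, or of
   every non-atomic measure) under measurable subsets is used; for shadowing
   the finitely many full-measure sets are intersected. *)

Lemma setT_eqP (T : Type) (A : set T) : A = setT <-> forall x, A x.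
Proof. by split=> [-> //|AT]; apply/seteqP; split=> x // _; exact: AT. Qed.

Section MetricSpace.
Variables (R : realType) (disp : measure_display) (X : measurableType disp).
Variable dist : X -> X -> R.
Hypotheses (dist_metric : is_metric dist) (dist_compact : dcompact dist).

Lemma dist_sym x y : dist x y = dist y x.
Proof. by case: dist_metric => _ [_ []]. Qed.

Lemma dist_triangle x y z : dist x z <= dist x y + dist y z.
Proof. by case: dist_metric => _ [_ [_]]. Qed.

Lemma distxx x : dist x x = 0.
Proof. by case: dist_metric => _ [distP _]; apply/distP. Qed.

Lemma mball_center x e : 0 < e -> mball dist x e x.
Proof. by rewrite /mball /= distxx. Qed.

Lemma dopen_mball x e : dopen dist (mball dist x e).
Proof.
move=> y /= xy; exists (e - dist x y); first by rewrite subr_gt0.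
move=> z /= yz; apply: le_lt_trans (dist_triangle x y z) _.
by rewrite -ltrBrDl.
Qed.

Lemma dcompact_uniform_cover (P : X -> R -> Prop) :
  (forall x, exists2 r, 0 < r & P x r) ->
  exists n (c : 'I_n -> X) (r : 'I_n -> R),
    [/\ forall j, P (c j) (r j),
        forall x, exists j, mball dist (c j) (r j) x &
        exists2 d, 0 < d & forall j, d <= r j].
Proof.
move=> Ploc; pose I := {p : X * R | 0 < p.2 /\ P p.1 p.2}.
have cover x : exists i : I, mball dist (sval i).1 (sval i).2 x.
  have [r r0 Pxr] := Ploc x.
  by exists (exist _ (x, r) (conj r0 Pxr)); exact: mball_center.
have [n [h hcover]] := dist_compact I _ (fun i => dopen_mball _ _) cover.
exists n, (fun j => (sval (h j)).1), (fun j => (sval (h j)).2); split => //.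
- by move=> j; case: (svalP (h j)).
- exists (\big[Order.min/1]_(j < n) (sval (h j)).2); last first.
    by move=> j; exact: bigmin_le.
  by apply: lt_bigmin => // j _; case: (svalP (h j)).
Qed.

Variable mu : {measure set X -> \bar R}.

Lemma conull_finite_meet n (B : 'I_n -> set X) :
  (forall j, measurable (B j)) -> (forall j, mu (~` B j) = 0%E) ->
  exists2 B0, measurable B0 /\ mu (~` B0) = 0%E & forall j, B0 `<=` B j.
Proof.
move=> mB nB; exists (\big[setI/setT]_(j < n) B j); last first.
  by move=> j; rewrite (bigD1 j) //= => x [].
rewrite -[X in measurable X]setCK setC_bigsetI.
suff [mU ->] : measurable (\big[setU/set0]_(j < n) ~` B j) /\
    mu (\big[setU/set0]_(j < n) ~` B j) = 0%E by split=> //; exact: measurableC.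
elim/big_ind: _ => [|A C [mA nA] [mC nC]|j _].
- by rewrite measure0.
- by rewrite measureU0 ?nA //; split=> //; exact: measurableU.
- by split; [exact/measurableC|exact: nB].
Qed.

Variables f g : X -> X.

Lemma shadowing_iff_locally_shadowable :
  has_shadowing dist f g mu <-> forall x, Sh_mu dist f g mu x.
Proof.
split=> [sh x eps eps0|Sh eps eps0].
  have [d d0 [B [mB [nB trace]]]] := sh eps eps0.
  by exists d => //; exists B; do 2!split=> //; move=> xs po [/(trace xs po)].
have [n [cen [r [Pj cover [d d0 dr]]]]] :=
  dcompact_uniform_cover _ (fun x => Sh x eps eps0).
have [B hB] := choice Pj.
have [B0 [mB0 nB0] B0B] := conull_finite_meet n B (fun j => proj1 (hB j))
  (fun j => proj1 (proj2 (hB j))).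
exists d => //; exists B0; do 2!split=> //; move=> xs po B0xs.
have [j xsj] := cover (xs 0); have [_ [_ trace]] := hB j.
apply: trace; last by split=> //; exact: B0B.
by move=> k; apply: lt_le_trans (po k) (dr j).
Qed.

Lemma dcontinuous_comp (a b : X -> X) :
  dcontinuous dist a -> dcontinuous dist b -> dcontinuous dist (a \o b).
Proof.
move=> a_cont b_cont x e e0; have [d1 d10 ad1] := a_cont (b x) e e0.
by have [d2 d20 bd2] := b_cont x d1 d10; exists d2 => // y /bd2 /ad1.
Qed.

Lemma dcontinuous_iter (a : X -> X) k :
  dcontinuous dist a -> dcontinuous dist (iter k a).
Proof.
move=> a_cont; elim: k => [|k IHk]; first by move=> x e e0; exists e.
by have -> : iter k.+1 a = a \o iter k a by []; exact: dcontinuous_comp.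
Qed.

Hypotheses (f_cont : dcontinuous dist f) (g_cont : dcontinuous dist g).

Lemma dcontinuous_iterz n : dcontinuous dist (iterz f g n).
Proof. by case: n => k; apply: dcontinuous_iter. Qed.

Lemma dopen_setC_Phi c x : dopen dist (~` Phi dist f g c x).
Proof.
move=> y /existsNP[n /negP]; rewrite -ltNge => cn.
pose gap := dist (iterz f g n x) (iterz f g n y) - c.
have [d d0 near_y] := dcontinuous_iterz n y gap (ltac:(by rewrite subr_gt0)).
exists d => // z /near_y yz Phi_z; have := Phi_z n.
have := dist_triangle (iterz f g n x) (iterz f g n z) (iterz f g n y).
by rewrite (dist_sym (iterz f g n z)) /gap in yz *; lra.
Qed.

Lemma GammaE c x z : Gamma dist f g c x z = mball dist x c `&` Phi dist f g c z.
Proof. by apply/seteqP; split=> y /= [xy yz]; split=> // n; rewrite dist_sym. Qed.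

Hypothesis dist_borel : borel_structure dist.

Lemma dopen_measurable U : dopen dist U -> measurable U.
Proof. by move=> Uopen; rewrite dist_borel; exact: sub_sigma_algebra. Qed.

Lemma Phi_measurable c x : measurable (Phi dist f g c x).
Proof.
rewrite -[Phi _ _ _ _ _]setCK.
exact/measurableC/dopen_measurable/dopen_setC_Phi.
Qed.

Lemma Gamma_measurable c x z : measurable (Gamma dist f g c x z).
Proof.
rewrite GammaE; apply: measurableI (Phi_measurable _ _).
exact/dopen_measurable/dopen_mball.
Qed.

Variable N : set X -> Prop.
Hypothesis N_subset :
  forall A B, measurable A -> measurable B -> A `<=` B -> N B -> N A.

Lemma Phi_uniformly_null_iff_Gamma_locally_null :
  (exists2 c, 0 < c & forall x, N (Phi dist f g c x)) <->
  (forall x, exists2 c, 0 < c &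
     forall z, mball dist x c z -> N (Gamma dist f g c x z)).
Proof.
split=> [[c c0 NPhi] x|Nloc].
  exists c => // z _; apply: N_subset (NPhi z);
    [exact: Gamma_measurable|exact: Phi_measurable|by rewrite GammaE => y []].
pose P x r := forall z, mball dist x (r * 2) z -> N (Gamma dist f g (r * 2) x z).
have Ploc x : exists2 r, 0 < r & P x r.
  have [c c0 Nc] := Nloc x; exists (c / 2); first by rewrite divr_gt0.
  by rewrite /P divfK.
have [n [cen [r [Pj cover [d d0 dr]]]]] := dcompact_uniform_cover _ Ploc.
exists d => // x; have [j xj] := cover x.
have dxj := dr j; rewrite /mball /= in xj.
apply: N_subset (Pj j x _); [exact: Phi_measurable|exact: Gamma_measurable| |];
  last by rewrite /mball /=; lra.
move=> y Phi_y; split; last by move=> k; rewrite dist_sym; have := Phi_y k; lra.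
by have := Phi_y 0; have := dist_triangle (cen j) x y; rewrite /mball /=; lra.
Qed.

End MetricSpace.

Definition nonatomic_null (R : realType) {disp : measure_display}
  {X : measurableType disp} (A : set X) : Prop :=
  forall nu : {measure set X -> \bar R}, non_atomic nu -> nu A = 0%E.

Lemma measure_expansiveE (R : realType) (disp : measure_display)
  (X : measurableType disp) (dist : X -> X -> R) (f g : X -> X) :
  measure_expansive dist f g <->
  exists2 c : R, 0 < c & forall x, nonatomic_null R (Phi dist f g c x).
Proof.
by split=> -[c c0 h]; exists c => //; [move=> x nu|move=> nu + x] => /h; apply.
Qed.

Lemma UE_ME (R : realType) (disp : measure_display)
  (X : measurableType disp) (dist : X -> X -> R) (f g : X -> X) :
  UE_M dist f g = [set x | exists2 c : R, 0 < c &
    forall z, mball dist x c z -> nonatomic_null R (Gamma dist f g c x z)].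
Proof.
apply/seteqP; split=> x [c c0 h]; exists c => //.
  by move=> z xz nu /h; apply.
by move=> nu + z => /h; apply.
Qed.

Lemma subset_nonatomic_null (R : realType) (disp : measure_display)
  (X : measurableType disp) (A B : set X) :
  measurable A -> measurable B -> A `<=` B ->
  nonatomic_null R B -> nonatomic_null R A.
Proof. by move=> mA mB AB NB nu nu_na; apply: subset_measure0 AB (NB nu nu_na). Qed.

Theorem proposition3p4 (R : realType) (disp : measure_display)
  (X : measurableType disp) (dist : X -> X -> R) (f g : X -> X)
  (mu : {measure set X -> \bar R}) :
  is_metric dist -> dcompact dist -> borel_structure dist ->
  homeo dist f g -> (0 < mu setT)%E ->
  [/\ expansive_measure dist f g mu <-> UE_mu dist f g mu = setT,
      measure_expansive dist f g <-> UE_M dist f g = setT &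
      has_shadowing dist f g mu <-> Sh_mu dist f g mu = setT].
Proof.
move=> metric cpt borel [_ [_ [f_cont g_cont]]] _.
split; rewrite setT_eqP.
- exact: Phi_uniformly_null_iff_Gamma_locally_null (@subset_measure0 _ X R mu).
- rewrite measure_expansiveE UE_ME.
  exact: Phi_uniformly_null_iff_Gamma_locally_null (@subset_nonatomic_null R _ X).
- exact: shadowing_iff_locally_shadowable.
Qed.
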